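(* If there exists a $\mathcal{D}$-snake for a domino tiling system $\mathcal{D}$, then $\mathcal{D}$ is solvable.
   Context: A domino tiling system is $\mathcal{D}=(\mathrm{Col},\mathrm{T},\mathrm{white})$ with $\mathrm{Col}$ a finite set of colours, $\mathrm{T}\subseteq\mathrm{Col}^4$ a set of tiles $(c_l,c_d,c_r,c_u)$ and $\mathrm{white}\in\mathrm{Col}$; throughout, $\mathrm{T}$ contains no tile with more than two white sides. A tile is left-/down-/right-/up-border if $c_l$/$c_d$/$c_r$/$c_u$ equals white. Tiles $t=(c_l,c_d,c_r,c_u)$, $t'=(c'_l,c'_d,c'_r,c'_u)$ are H-compatible if $c_r=c'_l$ and V-compatible if $c_u=c'_d$. $\mathcal{D}$ covers $\mathbb{Z}_n\times\mathbb{Z}_m$ ($n,m$ positive) if there is $\xi:\mathbb{Z}_n\times\mathbb{Z}_m\to\mathrm{T}$ such that for all $(x,y)$ with $\xi(x,y)=(c_l,c_d,c_r,c_u)$: $x=0$ iff $c_l$ is white, $x=n-1$ iff $c_r$ is white, $y=0$ iff $c_d$ is white, $y=m-1$ iff $c_u$ is white; $\xi(x,y),\xi(x+1,y)$ are H-compatible whenever $x+1<n$; $\xi(x,y),\xi(x,y+1)$ are V-compatible whenever $y+1<m$. $\mathcal{D}$ is solvable if it covers some $\mathbb{Z}_n\times\mathbb{Z}_m$. Use a role name $r$, individual names $\mathsf{ld},\mathsf{rd},\mathsf{lu},\mathsf{ru}$ (the named ones) and concept names $C_t$ ($t\in\mathrm{T}$); an element carries $t$ if it lies in $C_t^{\mathcal{I}}$.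 An interpretation $\mathcal{I}$ is a $\mathcal{D}$-snake if: (SPath) there is an $r^+$-path starting at $\mathsf{ld}^{\mathcal{I}}$, later passing $\mathsf{rd}^{\mathcal{I}}$, later $\mathsf{lu}^{\mathcal{I}}$ and ending at $\mathsf{ru}^{\mathcal{I}}$ (at positions $1<i<j<$ last); (SNoLoop) no named element $r^+$-reaches itself; (SUniqTil) every element $r^*$-reachable from $\mathsf{ld}^{\mathcal{I}}$ carries exactly one tile; (SSpecTil) the named elements are exactly the elements $r^*$-reachable from $\mathsf{ld}^{\mathcal{I}}$ carrying a tile with two white sides, and $\mathsf{ld}^{\mathcal{I}}$ carries a left- and down-border tile, $\mathsf{rd}^{\mathcal{I}}$ a right- and down-border tile, $\mathsf{lu}^{\mathcal{I}}$ a left- and up-border tile, $\mathsf{ru}^{\mathcal{I}}$ a right- and up-border tile; (SHori) for every element $d\neq\mathsf{ru}^{\mathcal{I}}$ that is $r^*$-reachable from $\mathsf{ld}^{\mathcal{I}}$ and carries $t=(c_l,c_d,c_r,c_u)$ there is a tile $t'=(c'_l,c'_d,c'_r,c'_u)$ carried by all $r$-successors of $d$ such that (i) $t,t'$ are H-compatible, (ii) if $c_d$ is white then ($c_r$ is not white iff $c'_d$ is white), (iii) if $c_u$ is white then $c'_u$ is white; (SLen) there is a unique positive integer $N$ such that all $r^+$-paths from $\mathsf{ld}^{\mathcal{I}}$ to $\mathsf{rd}^{\mathcal{I}}$ have length $N-1$, and $\mathsf{rd}^{\mathcal{I}}$ is the only element $r^{N-1}$-reachable from $\mathsf{ld}^{\mathcal{I}}$;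 (SVerti) for every element $d$ $r^*$-reachable from $\mathsf{ld}^{\mathcal{I}}$ carrying a tile $t$ that is not up-border, there is a tile $t'$ carried by all elements $r^N$-reachable from $d$ (with $N$ from (SLen)) such that $t,t'$ are V-compatible and $t$ is left-border (resp. right-border) iff $t'$ is. Path length is the number of edges. *)

From mathcomp Require Import all_boot.
Set Implicit Arguments. Unset Strict Implicit. Unset Printing Implicit Defensive.

Section Domino.
Variable Col : finType.

Definition tile := (Col * Col * Col * Col)%type.
Definition cl (t : tile) : Col := t.1.1.1.
Definition cd (t : tile) : Col := t.1.1.2.
Definition cr (t : tile) : Col := t.1.2.
Definition cu (t : tile) : Col := t.2.

Variable white : Col.

Definition left_border (t : tile) : Prop := cl t = white.
Definition down_border (t : tile) : Prop := cd t = white.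
Definition right_border (t : tile) : Prop := cr t = white.
Definition up_border (t : tile) : Prop := cu t = white.

Definition nwhite (t : tile) : nat :=
  (cl t == white) + (cd t == white) + (cr t == white) + (cu t == white).

Definition at_most_two_white (T : {set tile}) : Prop :=
  forall t, t \in T -> nwhite t <= 2.

Definition H_compat (t t' : tile) : Prop := cr t = cl t'.
Definition V_compat (t t' : tile) : Prop := cu t = cd t'.

Definition covers (T : {set tile}) (n m : nat) : Prop :=
  exists xi : nat -> nat -> tile,
    (forall x y, x < n -> y < m ->
       [/\ xi x y \in T,
           (x = 0 <-> cl (xi x y) = white),
           (x = n.-1 <-> cr (xi x y) = white),
           (y = 0 <-> cd (xi x y) = white) &
           (y = m.-1 <-> cu (xi x y) = white)]) /\
    (forall x y, x.+1 < n -> y < m -> H_compat (xi x y) (xi x.+1 y)) /\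
    (forall x y, x < n -> y.+1 < m -> V_compat (xi x y) (xi x y.+1)).

Definition solvable (T : {set tile}) : Prop :=
  exists n m, 0 < n /\ 0 < m /\ covers T n m.

(* Interpretations: domain D, role r, named individuals, concepts C_t. *)
Variable D : Type.
Variable r : D -> D -> Prop.

Inductive rpow : nat -> D -> D -> Prop :=
| rpow0 a : rpow 0 a a
| rpowS k a b c : r a b -> rpow k b c -> rpow k.+1 a c.

Definition rplus (a b : D) : Prop := exists k, 0 < k /\ rpow k a b.
Definition rstar (a b : D) : Prop := exists k, rpow k a b.

Variables (T : {set tile}) (C : tile -> D -> Prop) (ld rd lu ru : D).

Definition carries (t : tile) (d : D) : Prop := t \in T /\ C t d.

Definition named (d : D) : Prop := d = ld \/ d = rd \/ d = lu \/ d = ru.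

Definition SPath : Prop :=
  exists k1 k2 k3, [/\ 0 < k1, 0 < k2 & 0 < k3] /\
    [/\ rpow k1 ld rd, rpow k2 rd lu & rpow k3 lu ru].

Definition SNoLoop : Prop := forall d, named d -> ~ rplus d d.

Definition SUniqTil : Prop :=
  forall d, rstar ld d -> exists! t, carries t d.

Definition SSpecTil : Prop :=
  (forall d, named d <->
     (rstar ld d /\ exists t, carries t d /\ nwhite t = 2)) /\
  (exists t, carries t ld /\ left_border t /\ down_border t) /\
  (exists t, carries t rd /\ right_border t /\ down_border t) /\
  (exists t, carries t lu /\ left_border t /\ up_border t) /\
  (exists t, carries t ru /\ right_border t /\ up_border t).

Definition SHori : Prop :=
  forall d t, d <> ru -> rstar ld d -> carries t d ->
    exists t', t' \in T /\ (forall e, r d e -> carries t' e) /\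
      [/\ H_compat t t',
          (cd t = white -> (cr t <> white <-> cd t' = white)) &
          (cu t = white -> cu t' = white)].

Definition SLen_prop (N : nat) : Prop :=
  (forall k, 0 < k -> rpow k ld rd -> k = N.-1) /\
  rpow N.-1 ld rd /\ (forall e, rpow N.-1 ld e -> e = rd).

Definition SLen : Prop := exists! N, 0 < N /\ SLen_prop N.

Definition SVerti : Prop :=
  forall N, 0 < N -> SLen_prop N ->
  forall d t, rstar ld d -> carries t d -> ~ up_border t ->
    exists t', t' \in T /\ (forall e, rpow N d e -> carries t' e) /\
      [/\ V_compat t t',
          (left_border t <-> left_border t') &
          (right_border t <-> right_border t')].

Definition snake : Prop :=
  [/\ SPath, SNoLoop, SUniqTil, SSpecTil & SHori] /\ SLen /\ SVerti.

End Domino.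

From mathcomp Require Import all_boot zify.
From Stdlib Require Import ClassicalEpsilon.
Set Implicit Arguments. Unset Strict Implicit. Unset Printing Implicit Defensive.

(* Walking the snake's r-path from ld to ru and reading off the unique tile
   carried at each step gives a word w_0 ... w_L of tiles: consecutive tiles
   are H-compatible, and tiles N apart are V-compatible as long as the first
   one is not up-border.  By SHori (ii) the down border persists up to the
   first right-border tile, which then has exactly two white sides; it is
   therefore rd and sits at position N - 1.  Left and right borders propagate
   upwards with period N, and by SHori (iii) up borders persist to the end.
   So the first up-border tile is lu at the start of a row, the last tile ru
   ends that row, and cutting the word into rows of length N covers an
   N x (L + 1) / N rectangle. *)

Section Walks.
Variables (D : Type) (r : D -> D -> Prop).

Definition walk (f : nat -> D) (k : nat) : Prop := forall i, i < k -> r (f i) (f i.+1).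

Lemma walk_rpow f k i d : walk f k -> i + d <= k -> rpow r d (f i) (f (i + d)).
Proof.
move=> wf; elim: d i => [|d IH] i idk; first by rewrite addn0; constructor.
apply: rpowS; first by apply: wf; lia.
by rewrite -addSnnS; apply: IH; lia.
Qed.

Lemma walk_extend m a c : rpow r m a c ->
  forall f k, walk f k -> f k = a ->
  exists g, [/\ walk g (k + m), g (k + m) = c & forall i, i <= k -> g i = f i].
Proof.
elim=> {m a c} [a | m a b c rab _ IH] f k wf fka.
  by exists f; rewrite addn0.
pose f' i := if i <= k then f i else b.
have wf' : walk f' k.+1.
  move=> i; rewrite ltnS leq_eqVlt => /orP[/eqP-> | ik].
    by rewrite /f' leqnn ltnn fka.
  by rewrite /f' (ltnW ik) ik; apply: wf.
have f'k : f' k.+1 = b by rewrite /f' ltnn.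
have [g [wg gc gf']] := IH f' k.+1 wf' f'k.
exists g; rewrite addnS -addSn; split=> // i ik.
by rewrite gf' ?(leqW ik) // /f' ik.
Qed.

End Walks.

Section Tiles.
Variables (Col : finType) (white : Col).

Definition hori_succ (t t' : tile Col) : Prop :=
  [/\ H_compat t t',
      (cd t = white -> (cr t <> white <-> cd t' = white)) &
      (cu t = white -> cu t' = white)].

Definition verti_succ (t t' : tile Col) : Prop :=
  [/\ V_compat t t',
      (left_border white t <-> left_border white t') &
      (right_border white t <-> right_border white t')].

Lemma nwhite_right_border t : right_border white t ->
  nwhite white t = (cl t == white) + (cd t == white) + (cu t == white) + 1.
Proof. by move=> tr; rewrite /nwhite tr eqxx; lia. Qed.

Lemma right_down_corner t : nwhite white t <= 2 ->
  right_border white t -> down_border white t ->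
  ~ left_border white t /\ ~ up_border white t.
Proof.
move=> + tr td; rewrite nwhite_right_border // td eqxx => le2.
by split=> e; move: le2; rewrite e eqxx; lia.
Qed.

Lemma right_up_corner t : nwhite white t <= 2 ->
  right_border white t -> up_border white t ->
  ~ left_border white t /\ ~ down_border white t.
Proof.
move=> + tr tu; rewrite nwhite_right_border // tu eqxx => le2.
by split=> e; move: le2; rewrite e eqxx; lia.
Qed.

End Tiles.

Section TileWord.
Variables (Col : finType) (white : Col) (T : {set tile Col}).
Hypothesis HT : at_most_two_white white T.
Variables (w : nat -> tile Col) (L N : nat).
Hypotheses
  (w_in : forall i, i <= L -> w i \in T)
  (w_hori : forall i, i < L -> hori_succ white (w i) (w i.+1))
  (w_verti : forall i, i + N <= L -> ~ up_border white (w i) ->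
     verti_succ white (w i) (w (i + N)))
  (w_first : left_border white (w 0) /\ down_border white (w 0))
  (w_last : right_border white (w L) /\ up_border white (w L))
  (w_left_up : exists2 P, P <= L & left_border white (w P) /\ up_border white (w P))
  (w_right_down : forall i, i <= L ->
     right_border white (w i) -> down_border white (w i) -> i = N.-1)
  (w_right_up : forall i, i <= L ->
     right_border white (w i) -> up_border white (w i) -> i = L).

Lemma down_before_right j : j <= L ->
    (forall x, x < j -> ~ right_border white (w x)) ->
  forall x, x <= j -> down_border white (w x).
Proof.
move=> jL nr; elim=> [|x IH] xj; first by case: w_first.
have [_ Hd _] := w_hori (leq_trans xj jL).
by apply/(Hd (IH (ltnW xj))); apply: nr.
Qed.

Lemma bottom_right_corner : [/\ 0 < N.-1, N.-1 <= L &
  forall x, x <= N.-1 -> (right_border white (w x) <-> x = N.-1)].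
Proof.
have exR : exists j, (j <= L) && (cr (w j) == white).
  by exists L; rewrite leqnn; apply/eqP; case: w_last.
case: (ex_minnP exR) => j /andP[jL /eqP jr] jmin.
have first_j x : x <= L -> right_border white (w x) -> j <= x.
  by move=> xL xr; apply: jmin; rewrite xL xr eqxx.
have nr x : x < j -> ~ right_border white (w x).
  by move=> xj /(first_j x (ltnW (leq_trans xj jL))); rewrite leqNgt xj.
have down_j := down_before_right jL nr (leqnn j).
have j_pos : 0 < j.
  rewrite lt0n; apply/eqP => j0; rewrite j0 in jr.
  case: w_first => l d.
  by case: (right_down_corner (HT (w_in (leq0n L))) jr d).
have jN := w_right_down jL jr down_j.
rewrite -jN; split=> // x xj; split=> [xr | ->] //.
by apply/eqP; rewrite eqn_leq xj first_j // (leq_trans xj jL).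
Qed.

Lemma bottom_row x : x < N -> [/\ down_border white (w x),
  (left_border white (w x) <-> x = 0) & (right_border white (w x) <-> x = N.-1)].
Proof.
move=> xN; have [_ N1L Hr] := bottom_right_corner.
have xN1 : x <= N.-1 by lia.
have nr y : y < N.-1 -> ~ right_border white (w y).
  by move=> yN /(Hr y (ltnW yN)); lia.
split; [exact: down_before_right N1L nr x xN1 | | exact: Hr].
split=> [|->]; last by case: w_first.
case: x xN xN1 => // x _ xN1 xl; have [Hc _ _] := w_hori (leq_trans xN1 N1L).
by case: (nr x xN1); rewrite /right_border Hc.
Qed.

Lemma up_border_persists i k : i + k <= L ->
  up_border white (w i) -> up_border white (w (i + k)).
Proof.
elim: k => [|k IH] ik iu; first by rewrite addn0.
have ikL : i + k < L by rewrite addnS in ik.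
have [_ _ Hu] := w_hori ikL.
by rewrite addnS; apply/Hu/IH => //; apply: ltnW.
Qed.

Section BelowFirstUpBorder.
Variable i0 : nat.
Hypothesis not_up_below : forall i, i < i0 -> ~ up_border white (w i).

Lemma side_borders i : i <= L -> i < i0 + N ->
  (left_border white (w i) <-> i %% N = 0) /\
  (right_border white (w i) <-> i %% N = N.-1).
Proof.
elim/ltn_ind: i => i IH iL ii0.
have [N1_pos _ _] := bottom_right_corner.
case: (ltnP i N) => [iN | Ni].
  by rewrite modn_small //; case: (bottom_row iN).
have iNL : i - N + N <= L by rewrite subnK.
have iNi0 : i - N < i0 by lia.
have [_ Hl Hr] := w_verti iNL (not_up_below iNi0).
have -> : i %% N = (i - N) %% N by rewrite -(modnDr (i - N)) subnK.
by rewrite subnK // in Hl Hr; rewrite -Hl -Hr; apply: IH; lia.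
Qed.

Lemma down_border_bottom i : i <= L -> i < i0 + N ->
  (down_border white (w i) <-> i < N).
Proof.
case: (ltnP i N) => [iN | Ni] iL ii0; first by case: (bottom_row iN).
split=> // id.
have iNL : i - N + N <= L by rewrite subnK.
have iNi0 : i - N < i0 by lia.
have [Hv _ _] := w_verti iNL (not_up_below iNi0).
by case: (not_up_below iNi0); rewrite /up_border Hv subnK.
Qed.

End BelowFirstUpBorder.

Lemma last_row : exists i0, [/\ i0 %% N = 0, L = i0 + N.-1 &
  forall i, i <= L -> (up_border white (w i) <-> i0 <= i)].
Proof.
have exU : exists i, (i <= L) && (cu (w i) == white).
  by exists L; rewrite leqnn; apply/eqP; case: w_last.
case: (ex_minnP exU) => i0 /andP[i0L /eqP i0u] i0min.
have below i : i < i0 -> ~ up_border white (w i).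
  move=> ii0 iu; suff : i0 <= i by rewrite leqNgt ii0.
  by apply: i0min; rewrite iu eqxx andbT; lia.
have above i : i0 <= i -> i <= L -> up_border white (w i).
  by move=> i0i iL; rewrite -(subnKC i0i); apply: up_border_persists; rewrite ?subnKC.
have [N1_pos _ _] := bottom_right_corner.
have N_pos : 0 < N by lia.
have L_lt : L < i0 + N.
  rewrite ltnNge; apply/negP => LN.
  pose z := i0 %/ N * N + N.-1.
  have [i0z zi0] : i0 <= z /\ z < i0 + N.
    by have := divn_eq i0 N; have := ltn_pmod i0 N_pos; lia.
  have zL : z <= L by lia.
  have zr : right_border white (w z).
    by apply/(side_borders below zL zi0).2; rewrite modnMDl modn_small //; lia.
  by have := w_right_up zL zr (above z i0z zL); lia.
have Lmod : L %% N = N.-1.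
  by apply/(side_borders below (leqnn L) L_lt).2; case: w_last.
have [P PL [Pl Pu]] := w_left_up.
have i0P : i0 <= P by rewrite leqNgt; apply/negP => /below.
have Pi0N : P < i0 + N by lia.
have Pmod : P %% N = 0 by apply/(side_borders below PL Pi0N).1.
have LP : L = P + N.-1.
  have LPN : L - P < N by lia.
  have := modnDmr (L - P) P N; rewrite Pmod addn0 subnK // Lmod modn_small //.
  by lia.
have i0P' : i0 = P by lia.
subst P; exists i0; split=> // i iL; split=> [iu | i0i]; last exact: above.
by rewrite leqNgt; apply/negP => /below.
Qed.

Lemma tile_word_solvable : solvable white T.
Proof.
have [N1_pos _ _] := bottom_right_corner.
have [i0 [i0mod LE up_iff]] := last_row.
have below i : i < i0 -> ~ up_border white (w i).
  move=> ii0; have iL : i <= L by lia.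
  by move/(up_iff i iL); rewrite leqNgt ii0.
pose a := i0 %/ N.
have i0E : i0 = a * N by rewrite {1}(divn_eq i0 N) i0mod addn0.
exists N, a.+1; split; first lia; split=> //.
exists (fun x y => w (y * N + x)); split; [|split].
- move=> x y xN ya.
  have kL : y * N + x <= L by nia.
  have ki0 : y * N + x < i0 + N by nia.
  have [Hl Hr] := side_borders below kL ki0.
  rewrite modnMDl modn_small // in Hl Hr.
  split; [exact: w_in | exact: iff_sym | exact: iff_sym | |].
  + by apply: (iff_trans _ (iff_sym (down_border_bottom below kL ki0))); nia.
  + by apply: (iff_trans _ (iff_sym (up_iff _ kL))); nia.
- move=> x y xN ya.
  have kL : y * N + x < L by nia.
  by have [Hc _ _] := w_hori kL; rewrite -addnS in Hc.
- move=> x y xN ya.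
  have kL : y * N + x + N <= L by nia.
  have ki0 : y * N + x < i0 by nia.
  have [Hv _ _] := w_verti kL (below _ ki0).
  by have -> : y.+1 * N + x = y * N + x + N by rewrite mulSn; lia.
Qed.

End TileWord.

Section SnakeWord.
Variables (Col : finType) (white : Col) (T : {set tile Col}).
Hypothesis HT : at_most_two_white white T.
Variables (D : Type) (r : D -> D -> Prop) (C : tile Col -> D -> Prop).
Variables (ld rd lu ru : D) (N : nat).
Hypotheses (no_loop : SNoLoop r ld rd lu ru) (uniq_tile : SUniqTil r T C ld)
  (spec_tile : SSpecTil white r T C ld rd lu ru) (hori : SHori white r T C ld ru)
  (N_pos : 0 < N) (len : SLen_prop r ld rd N) (verti : SVerti white r T C ld rd).
Variables (p : nat -> D) (L P : nat).
Hypotheses (p_walk : walk r p L) (p0 : p 0 = ld) (pP : p P = lu) (PL : P <= L)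
  (pL : p L = ru).

Lemma reach_p i : i <= L -> rstar r ld (p i).
Proof. by move=> iL; exists i; rewrite -p0; apply: (walk_rpow (i := 0) p_walk). Qed.

Definition tile_at (i : nat) : tile Col :=
  epsilon (inhabits (white, white, white, white)) (fun t => carries T C t (p i)).

Lemma tile_at_carried i : i <= L -> carries T C (tile_at i) (p i).
Proof.
move=> /reach_p /uniq_tile [t [Ht _]].
exact: (epsilon_spec _ (fun t => carries T C t (p i)) (ex_intro _ t Ht)).
Qed.

Lemma tile_at_unique i t : i <= L -> carries T C t (p i) -> tile_at i = t.
Proof.
move=> iL Ht; have [t0 [_ t0_uniq]] := uniq_tile (reach_p iL).
by rewrite -(t0_uniq _ Ht); apply/esym/t0_uniq/tile_at_carried.
Qed.

Lemma tile_at_in i : i <= L -> tile_at i \in T.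
Proof. by case/tile_at_carried. Qed.

Lemma ru_only_at_end i : i < L -> p i <> ru.
Proof.
move=> iL piru; apply: (no_loop (d := ru)); first by do 3 right.
exists (L - i); split; first by rewrite subn_gt0.
have := walk_rpow p_walk (i := i) (d := L - i).
by rewrite subnKC ?(ltnW iL) // pL piru; apply.
Qed.

Lemma tile_at_hori i : i < L -> hori_succ white (tile_at i) (tile_at i.+1).
Proof.
move=> iL; have iL' := ltnW iL.
have [t' [_ [t'_carried t_t']]] :=
  hori (ru_only_at_end iL) (reach_p iL') (tile_at_carried iL').
by rewrite (tile_at_unique iL (t'_carried _ (p_walk iL))).
Qed.

Lemma tile_at_verti i : i + N <= L -> ~ up_border white (tile_at i) ->
  verti_succ white (tile_at i) (tile_at (i + N)).
Proof.
move=> iNL iu; have iL : i <= L by lia.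
have [t' [_ [t'_carried t_t']]] := verti N_pos len (reach_p iL) (tile_at_carried iL) iu.
by rewrite (tile_at_unique iNL (t'_carried _ (walk_rpow p_walk iNL))).
Qed.

Lemma tile_at_first : left_border white (tile_at 0) /\ down_border white (tile_at 0).
Proof.
case: spec_tile => _ [[t [Ct lt_dt]] _].
by rewrite (@tile_at_unique 0 t) // p0.
Qed.

Lemma tile_at_last : right_border white (tile_at L) /\ up_border white (tile_at L).
Proof.
case: spec_tile => _ [_ [_ [_ [t [Ct rt_ut]]]]].
by rewrite (@tile_at_unique L t) // pL.
Qed.

Lemma tile_at_left_up : left_border white (tile_at P) /\ up_border white (tile_at P).
Proof.
case: spec_tile => _ [_ [_ [[t [Ct lt_ut]] _]]].
by rewrite (@tile_at_unique P t) // pP.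
Qed.

Lemma tile_at_right_named i : i <= L -> right_border white (tile_at i) ->
  down_border white (tile_at i) \/ up_border white (tile_at i) ->
  named ld rd lu ru (p i).
Proof.
move=> iL ir idu; have le2 := HT (tile_at_in iL).
case: spec_tile => named_iff _; apply/named_iff; split; first exact: reach_p.
exists (tile_at i); split; first exact: tile_at_carried.
by move: le2; rewrite !nwhite_right_border //; case: idu => e; rewrite e eqxx; lia.
Qed.

Lemma tile_at_right_down i : i <= L ->
  right_border white (tile_at i) -> down_border white (tile_at i) -> i = N.-1.
Proof.
move=> iL ir id; have [nl nu] := right_down_corner (HT (tile_at_in iL)) ir id.
case: spec_tile => _ [[tld [Cld [lld _]]] [_ [[tlu [Clu [llu _]]] [tru [Cru [_ uru]]]]]].
case: (tile_at_right_named iL ir (or_introl id)) => [E|[E|[E|E]]].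
- by case: nl; rewrite (@tile_at_unique i tld) // E.
- have i_pos : 0 < i.
    by rewrite lt0n; apply/eqP => i0; subst i; case: nl; case: tile_at_first.
  case: len => len_eq _; apply: (len_eq i i_pos).
  by rewrite -p0 -E; apply: (walk_rpow (i := 0) p_walk).
- by case: nl; rewrite (@tile_at_unique i tlu) // E.
- by case: nu; rewrite (@tile_at_unique i tru) // E.
Qed.

Lemma tile_at_right_up i : i <= L ->
  right_border white (tile_at i) -> up_border white (tile_at i) -> i = L.
Proof.
move=> iL ir iu; have [nl nd] := right_up_corner (HT (tile_at_in iL)) ir iu.
case: spec_tile => _ [[tld [Cld [lld _]]] [[trd [Crd [_ drd]]] [[tlu [Clu [llu _]]] _]]].
case: (tile_at_right_named iL ir (or_intror iu)) => [E|[E|[E|E]]].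
- by case: nl; rewrite (@tile_at_unique i tld) // E.
- by case: nd; rewrite (@tile_at_unique i trd) // E.
- by case: nl; rewrite (@tile_at_unique i tlu) // E.
- apply/eqP; rewrite eqn_leq iL leqNgt; apply/negP.
  by move/ru_only_at_end; apply.
Qed.

Lemma snake_walk_solvable : solvable white T.
Proof.
apply: (tile_word_solvable HT (w := tile_at) (L := L) (N := N)).
- exact: tile_at_in.
- exact: tile_at_hori.
- exact: tile_at_verti.
- exact: tile_at_first.
- exact: tile_at_last.
- by exists P; last exact: tile_at_left_up.
- exact: tile_at_right_down.
- exact: tile_at_right_up.
Qed.

End SnakeWord.

Theorem lemma4p4 (Col : finType) (T : {set tile Col}) (white : Col)
  (HT : at_most_two_white white T) :
  (exists (D : Type) (r : D -> D -> Prop) (C : tile Col -> D -> Prop)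
          (ld rd lu ru : D),
     snake white r T C ld rd lu ru) ->
  solvable white T.
Proof.
move=> [D [r [C [ld [rd [lu [ru [[path no_loop uniq_tile spec_tile hori]
  [[N [[N_pos len] _]] verti]]]]]]]]].
case: path => k1 [k2 [k3 [_ [ld_rd rd_lu lu_ru]]]].
have walk0 : walk r (fun=> ld) 0 by [].
have [f1 [walk1 f1_rd f1_ld]] := walk_extend ld_rd walk0 erefl.
have [f2 [walk2 f2_lu f2_f1]] := walk_extend rd_lu walk1 f1_rd.
have [f3 [walk3 f3_ru f3_f2]] := walk_extend lu_ru walk2 f2_lu.
apply: (snake_walk_solvable HT no_loop uniq_tile spec_tile hori N_pos len verti
          walk3 _ _ (leq_addr k3 _) f3_ru).
- by rewrite f3_f2 // f2_f1 // f1_ld.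
- by rewrite f3_f2 //; exact: f2_lu.
Qed.
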